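(* Let $P$ be a Horn labelled program that is consistent (i.e. has at least one classical model). Then $P$ has a unique justified model, and it coincides with the least classical model of $P$.
   Context: Fix a finite non-empty set $\mathit{At}$ of propositional atoms. A labelled rule $r$ has the form $\ell : p_1 \vee \dots \vee p_m \leftarrow q_1 \wedge \dots \wedge q_n \wedge \neg s_1 \wedge \dots \wedge \neg s_j \wedge \neg\neg t_1 \wedge \dots \wedge \neg\neg t_k$ with $m,n,j,k \ge 0$ and atoms in $\mathit{At}$; $\mathit{Lb}(r)=\ell$, $\mathit{Hd}(r)=p_1\vee\dots\vee p_m$, $H(r)=\{p_1,\dots,p_m\}$, $\mathit{Bd}(r)$ is the whole antecedent, $\mathit{Bd}^+(r)=q_1\wedge\dots\wedge q_n$, $B^+(r)=\{q_1,\dots,q_n\}$, $\mathit{Bd}^-(r)=\neg s_1 \wedge \dots \wedge \neg s_j \wedge \neg\neg t_1 \wedge \dots \wedge \neg\neg t_k$. Empty disjunction is $\bot$, empty conjunction $\top$. A labelled program $P$ is a finite set of labelled rules with no repeated label; $\mathit{Lb}(P)$ is its set of labels. $P$ is Horn if $\mathit{Bd}^-(r)=\top$ and $|H(r)|\le 1$ for all $r\in P$ (so constraints $\bot\leftarrow q_1\wedge\dots\wedge q_n$ are allowed). An interpretation $I\subseteq\mathit{At}$ is a (classical) model of $P$ if $I\models \mathit{Bd}(r)\to\mathit{Hd}(r)$ for every $r\in P$. $\mathit{Sup}(I,P,p)=\{ r \in P \mid p \in H(r),\ I \models \mathit{Bd}(r)\}$. A support graph of a model $I$ under $P$ is a directed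 graph $G=\langle I,E,\lambda\rangle$ with vertex set $I$, edges $E\subseteq I\times I$ and a labelling $\lambda: I\to \mathit{Lb}(P)$ such that (i) $\lambda$ is injective, and (ii) for every $p\in I$, the rule $r\in P$ with $\mathit{Lb}(r)=\lambda(p)$ satisfies $r\in \mathit{Sup}(I,P,p)$ and $B^+(r)=\{q \mid (q,p)\in E\}$. An explanation is an acyclic support graph. A classical model $I$ of $P$ is a justified model if some explanation of $I$ under $P$ exists. *)

From mathcomp Require Import all_boot.
From Stdlib Require List.
Set Implicit Arguments. Unset Strict Implicit. Unset Printing Implicit Defensive.

(* A labelled rule  l : p1 v .. v pm <- q1 /\ .. /\ qn /\ ~s1 /\ .. /\ ~sj /\ ~~t1 /\ .. /\ ~~tk *)
Record rule (At : finType) (L : Type) := Rule {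
  lab  : L;
  hd   : seq At;
  pos  : seq At;
  neg  : seq At;
  nneg : seq At
}.

Definition labelled_program (At : finType) (L : eqType) (P : seq (rule At L)) : Prop :=
  uniq (map (@lab At L) P).

Definition horn (At : finType) (L : Type) (P : seq (rule At L)) : Prop :=
  forall r, List.In r P -> neg r = [::] /\ nneg r = [::] /\ size (hd r) <= 1.

(* I |= Bd(r)  (classically, I |= ~~t iff t \in I) *)
Definition body_sat (At : finType) (L : Type) (I : {set At}) (r : rule At L) : bool :=
  all (fun q => q \in I) (pos r) && all (fun s => s \notin I) (neg r)
  && all (fun t => ~~ ~~ (t \in I)) (nneg r).

Definition head_sat (At : finType) (L : Type) (I : {set At}) (r : rule At L) : bool :=
  has (fun p => p \in I) (hd r).

Definition is_model (At : finType) (L : Type) (P : seq (rule At L)) (I : {set At}) : Prop :=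
  forall r, List.In r P -> body_sat I r -> head_sat I r.

Definition consistent (At : finType) (L : Type) (P : seq (rule At L)) : Prop :=
  exists I, is_model P I.

Definition least_model (At : finType) (L : Type) (P : seq (rule At L)) (I : {set At}) : Prop :=
  is_model P I /\ forall J, is_model P J -> I \subset J.

Definition in_Sup (At : finType) (L : Type) (I : {set At}) (P : seq (rule At L)) (p : At)
  (r : rule At L) : Prop :=
  List.In r P /\ p \in hd r /\ body_sat I r.

(* Support graph <I, E, lambda> of I under P.  E : rel At restricted to I x I;
   the labelling lambda : I -> Lb(P) is encoded as a partial map At -> option L
   defined (Some) exactly on I. *)
Definition support_graph (At : finType) (L : Type) (P : seq (rule At L)) (I : {set At})
  (E : rel At) (lambda : At -> option L) : Prop :=
  (forall p q, E p q -> p \in I /\ q \in I) /\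
  (forall p, p \notin I -> lambda p = None) /\
  (forall p q, p \in I -> q \in I -> lambda p = lambda q -> p = q) /\
  (forall p, p \in I -> exists r, lambda p = Some (lab r) /\ in_Sup I P p r /\
       forall q, (q \in pos r) = E q p).

Definition acyclic (At : finType) (E : rel At) : Prop :=
  forall p q, E p q -> ~~ connect E q p.

Definition explanation (At : finType) (L : Type) (P : seq (rule At L)) (I : {set At})
  (E : rel At) (lambda : At -> option L) : Prop :=
  support_graph P I E lambda /\ acyclic E.

Definition justified_model (At : finType) (L : Type) (P : seq (rule At L)) (I : {set At}) : Prop :=
  is_model P I /\ exists E lambda, explanation P I E lambda.

From mathcomp Require Import all_boot.
From Stdlib Require List.

Set Implicit Arguments. Unset Strict Implicit. Unset Printing Implicit Defensive.

(* Every classical model of a Horn program is a prefixpoint of the immediate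
   consequence operator T_P, so the least fixpoint of T_P lies below every
   model; it can only fail to be a model by violating a constraint, which
   consistency excludes.  Labelling each atom of the least fixpoint with a rule
   by which it enters at its first stage T_P^k(0) gives an explanation, acyclic
   because edges strictly increase the stage.  Conversely, induction along the
   acyclic edges of an explanation of J shows that J is contained in the least
   fixpoint; if J is also a model, the two coincide. *)

Lemma has_InP (T : Type) (a : pred T) (s : seq T) :
  reflect (exists2 x, List.In x s & a x) (has a s).
Proof.
elim: s => [|x s IHs] /=; first by right=> [[]].
apply: (iffP orP) => [[ax | /IHs [y sy ay]] | [y [<- | sy] ay]].
- by exists x; first left.
- by exists y; first right.
- by left.
- by right; apply/IHs; exists y.
Qed.

Lemma ohead_filter_In (T : Type) (a : pred T) (s : seq T) x :
  ohead (filter a s) = Some x -> List.In x s /\ a x.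
Proof.
elim: s => [|y s IHs] //=; case: ifP => [ay /= [<-] | _ /IHs [sx ax]].
- by split; first left.
- by split; first right.
Qed.

Lemma has_ohead_filter (T : Type) (a : pred T) (s : seq T) :
  has a s -> exists x, ohead (filter a s) = Some x.
Proof. by rewrite has_count -size_filter; case: (filter a s) => //= x ? _; exists x. Qed.

Lemma In_map_mem (T : Type) (U : eqType) (f : T -> U) (s : seq T) x :
  List.In x s -> f x \in map f s.
Proof. by elim: s => [|y s IHs] //= [<- | /IHs fx]; rewrite inE ?eqxx ?fx ?orbT. Qed.

Lemma uniq_map_In_inj (T : Type) (U : eqType) (f : T -> U) (s : seq T) x y :
  uniq (map f s) -> List.In x s -> List.In y s -> f x = f y -> x = y.
Proof.
elim: s => [|z s IHs] //= /andP [fz_notin uniq_fs] [<- | sx] [<- | sy] // fxy.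
- by move: fz_notin; rewrite fxy In_map_mem.
- by move: fz_notin; rewrite -fxy In_map_mem.
- exact: IHs.
Qed.

Lemma fixset_sub_prefix (T : finType) (F : {set T} -> {set T}) (X : {set T}) :
  {homo F : Y Z / Y \subset Z} -> F X \subset X -> fixset F \subset X.
Proof.
move=> F_mono FXX; rewrite /fixset; elim: #|T| => [|n IHn] /=; first exact: sub0set.
exact: subset_trans (F_mono _ _ IHn) FXX.
Qed.

Section AcyclicGraph.

Variables (T : finType) (E : rel T).

Lemma acyclic_ind (Q : T -> Prop) :
  acyclic E -> (forall p, (forall q, E q p -> Q q) -> Q p) -> forall p, Q p.
Proof.
move=> acycE IH p; have [n] := ubnP #|[set q | connect E q p]|.
elim: n p => // n IHn p ancestors_p; apply: IH => q Eqp; apply: IHn.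
rewrite -ltnS; apply: leq_trans ancestors_p; rewrite ltnS; apply/proper_card/properP; split.
- by apply/subsetP => x; rewrite !inE => /connect_trans; apply; exact: connect1.
- by exists p; rewrite !inE ?connect0 // acycE.
Qed.

Lemma rank_acyclic (rk : T -> nat) :
  (forall p q, E p q -> rk p < rk q) -> acyclic E.
Proof.
move=> rkE; have rk_connect x y : connect E x y -> rk x <= rk y.
  case/connectP=> s; elim: s x => [|z s IHs] x /= => [_ -> // | /andP [/rkE/ltnW xz /IHs zy] /zy].
  exact: leq_trans.
by move=> p q /rkE; rewrite ltnNge => /negP qp; apply/negP => /rk_connect.
Qed.

End AcyclicGraph.

Section ConsequenceOperator.

Variables (At : finType) (L : Type) (P : seq (rule At L)).

Definition derives (X : {set At}) (p : At) (r : rule At L) : bool :=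
  (p \in hd r) && all (fun q => q \in X) (pos r).

Definition TP (X : {set At}) : {set At} := [set p | has (derives X p) P].

Lemma TP_mono : {homo TP : X Y / X \subset Y}.
Proof.
move=> X Y /subsetP XY; apply/subsetP => p; rewrite !inE.
case/has_InP=> r Pr /andP [p_r /allP posX]; apply/has_InP; exists r => //.
by rewrite /derives p_r; apply/allP => q /posX /XY.
Qed.

Lemma in_lfpP p :
  reflect (exists2 r, List.In r P & derives (fixset TP) p r) (p \in fixset TP).
Proof. by rewrite -{2}(fixsetK TP_mono) inE; apply: has_InP. Qed.

Lemma explanation_sub_lfp (J : {set At}) E lambda :
  explanation P J E lambda -> J \subset fixset TP.
Proof.
move=> [[_ [_ [_ supported]]] acycE]; apply/subsetP.
apply: (acyclic_ind acycE) => p IHp pJ.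
have [r [_ [[Pr [p_r /andP [/andP [/allP posJ _] _]]] posE]]] := supported p pJ.
apply/in_lfpP; exists r => //; rewrite /derives p_r; apply/allP => q q_r.
by apply: IHp (posJ q q_r); rewrite -posE.
Qed.

Section Horn.

Hypothesis hornP : horn P.

Lemma horn_body_sat (I : {set At}) r :
  List.In r P -> body_sat I r = all (fun q => q \in I) (pos r).
Proof. by move=> /hornP [neg_r [nneg_r _]]; rewrite /body_sat neg_r nneg_r /= !andbT. Qed.

Lemma horn_hd r p : List.In r P -> p \in hd r -> hd r = [:: p].
Proof.
by move=> /hornP [_ [_]]; case: (hd r) => [|a [|b s]] //= _; rewrite mem_seq1 => /eqP ->.
Qed.

Lemma model_TP_sub (M : {set At}) : is_model P M -> TP M \subset M.
Proof.
move=> modelM; apply/subsetP => p; rewrite inE => /has_InP [r Pr /andP [p_r posM]].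
by have := modelM r Pr; rewrite horn_body_sat // /head_sat (horn_hd Pr p_r) /= orbF; apply.
Qed.

Lemma lfp_sub_model (M : {set At}) : is_model P M -> fixset TP \subset M.
Proof. by move=> /model_TP_sub; apply: fixset_sub_prefix TP_mono. Qed.

Lemma lfp_model : consistent P -> is_model P (fixset TP).
Proof.
move=> [M modelM] r Pr; rewrite horn_body_sat // => posI.
have [_ [_]] := hornP Pr; rewrite /head_sat.
case hd_r: (hd r) => [|p [|//]] _ /=.
- have := modelM r Pr; rewrite horn_body_sat // /head_sat hd_r; apply.
  by apply/allP => q /(allP posI) /(subsetP (lfp_sub_model modelM)).
- by rewrite orbF; apply/in_lfpP; exists r; rewrite // /derives hd_r mem_seq1 eqxx.
Qed.

End Horn.

Definition support_rule (p : At) : option (rule At L) :=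
  if p \in fixset TP then
    ohead [seq r <- P | derives (iter (fix_order TP p).-1 TP set0) p r]
  else None.

Definition support_edge : rel At :=
  fun q p => if support_rule p is Some r then q \in pos r else false.

Definition support_label (p : At) : option L := omap (@lab At L) (support_rule p).

Lemma support_rule_lfp p : p \in fixset TP -> exists r, support_rule p = Some r.
Proof.
move=> pI; rewrite /support_rule pI; apply: has_ohead_filter.
move: (fix_order_gt0 TP p) (in_iter_fix_orderE TP p); rewrite pI.
by case: (fix_order TP p) => //= k _; rewrite inE.
Qed.

Lemma support_ruleP p r : support_rule p = Some r ->
  [/\ p \in fixset TP, List.In r P, p \in hd r
    & {subset pos r <= iter (fix_order TP p).-1 TP set0}].
Proof.
rewrite /support_rule; case: ifP => // pI sp.
by have [Pr /andP [p_r /allP posX]] := ohead_filter_In sp.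
Qed.

Lemma support_rule_fix_order p q r :
  support_rule p = Some r -> q \in pos r -> fix_order TP q < fix_order TP p.
Proof.
move=> /support_ruleP [pI _ _ posX] /posX /(fix_order_small TP_mono).
by rewrite -fix_order_gt0 in pI; case: (fix_order TP p) pI.
Qed.

End ConsequenceOperator.

Section LeastFixpointExplanation.

Variables (At : finType) (L : eqType) (P : seq (rule At L)).
Hypotheses (hornP : horn P) (labelledP : labelled_program P).

Lemma lfp_explanation : explanation P (fixset (TP P)) (support_edge P) (support_label P).
Proof.
have stage_lfp k : iter k (TP P) set0 \subset fixset (TP P) :=
  iter_sub_fix (TP_mono P) k.
split; last first.
  apply: (rank_acyclic (rk := fix_order (TP P))) => q p; rewrite /support_edge.
  by case sp: (support_rule P p) => [r|] //; apply: support_rule_fix_order.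
split.
  move=> q p; rewrite /support_edge; case sp: (support_rule P p) => [r|] // q_r.
  have [pI _ _ posX] := support_ruleP sp.
  by split=> //; apply: (subsetP (stage_lfp _)); apply: posX.
split.
  by move=> p /negPf pI; rewrite /support_label /support_rule pI.
split.
  move=> p q pI qI; have [r sp] := support_rule_lfp pI; have [r' sq] := support_rule_lfp qI.
  rewrite /support_label sp sq => -[lab_rr'].
  have [_ Pr p_r _] := support_ruleP sp; have [_ Pr' q_r' _] := support_ruleP sq.
  have rr' := uniq_map_In_inj labelledP Pr Pr' lab_rr'.
  by move: (horn_hd hornP Pr p_r); rewrite rr' (horn_hd hornP Pr' q_r') => -[].
move=> p pI; have [r sp] := support_rule_lfp pI; have [_ Pr p_r posX] := support_ruleP sp.
exists r; split; first by rewrite /support_label sp.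
split; last by move=> q; rewrite /support_edge sp.
split=> //; split=> //; rewrite (horn_body_sat hornP _ Pr).
by apply/allP => q /posX; apply/subsetP.
Qed.

End LeastFixpointExplanation.

Theorem proposition4 (At : finType) (L : eqType) (P : seq (rule At L)) :
  0 < #|At| ->
  labelled_program P -> horn P -> consistent P ->
  exists I : {set At}, least_model P I /\
    (forall J : {set At}, justified_model P J <-> J = I).
Proof.
move=> _ labelledP hornP consistentP.
have lfp_modelP := lfp_model hornP consistentP.
exists (fixset (TP P)); split; first by split=> // M; apply: lfp_sub_model.
move=> J; split=> [[modelJ [E [lambda explJ]]] | ->].
- apply/eqP; rewrite eqEsubset (explanation_sub_lfp explJ).
  exact: lfp_sub_model.
- by split=> //; exists (support_edge P), (support_label P); apply: lfp_explanation.
Qed.
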